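(* Let $S$ be a strongly $E^*$-unitary inverse semigroup, let $R$ be a commutative unital ring, and let $\varphi_1:S^\times\to G_1$ and $\varphi_2:S^\times\to G_2$ be two pure gradings of $S$. Then $L_R(S,\varphi_1)\cong L_R(S,\varphi_2)$ as $R$-algebras.
   Context: $S$ is an inverse semigroup with zero, $s^*$ the unique inverse of $s$, $E$ its idempotents (a meet semilattice with $x\wedge y=xy$, least element $0$), $S^\times=S\setminus\{0\}$, $E^\times=E\setminus\{0\}$. A pure grading is a map $\varphi:S^\times\to G$ to a group with $\varphi(ab)=\varphi(a)\varphi(b)$ whenever $ab\ne0$ and $\varphi^{-1}(1_G)=E^\times$; $S$ is strongly $E^*$-unitary if it has one. For $g\in G$, $E_g=\{x\in E: x\le ss^*$ for some $s$ with $\varphi(s)=g\}$ if $\varphi^{-1}(g)\ne\emptyset$, else $\{0\}$. $\phi_g:E_{g^{-1}}\to E_g$, $x\mapsto sxs^*$ (any $s$ with $\varphi(s)=g$, $x\le s^*s$) is a meet-semilattice isomorphism. For a meet semilattice $P$ with $0$: a filter is a subset $F$, $\emptyset\ne F\ne P$, closed upwards and under meets; $F(P)$ has topology generated by $\{F:x\in F\}$; tight filters $T(P)$ are the closure of the ultrafilters; $V^P_{(x:x_1,\dots,x_n)}=\{\xi\in T(P):x\in\xi, x_i\notin\xi\}$; $\mathcal T_c(P)$ is the generalized Boolean algebra of compact open subsets of $T(P)$. $\mathcal T_c(E_g)$ is identified with the ideal of $\mathcal T_c(E)$ consisting of compact open sets contained in $\bigcup_{x\in E_g}V^E_x$ (via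 $V^{E_g}_{(x:x_1,\dots)}\mapsto V^E_{(x:x_1,\dots)}$), and $\hat\phi_g:\mathcal T_c(E_{g^{-1}})\to\mathcal T_c(E_g)$ is the isomorphism induced by $\phi_g$ ($V_{(x:x_1,\dots,x_n)}\mapsto V_{(\phi_g(x):\phi_g(x_1),\dots,\phi_g(x_n))}$). $\Phi=(\{\mathcal T_c(E_g)\},\{\hat\phi_g\})$ is a partial action of $G$ on $\mathcal T_c(E)$. For a partial action $\Phi=(\{\mathcal I_t\},\{\phi_t\})$ on a generalized Boolean algebra $\mathcal B$ and commutative unital ring $R$: $\mathrm{Lc}(R,\mathcal B)$ is the $R$-algebra of functions $f:R\setminus\{0\}\to\mathcal B$ with pairwise disjoint values, almost all $0$, viewed as the function $\sum_r r1_{f(r)}$ (equivalently locally constant compactly supported $R$-valued functions on the Stone dual of $\mathcal B$); the partial skew group ring $\mathrm{Lc}(R,\mathcal B)\rtimes_\Phi G$ consists of finite sums $\sum_t f_t\delta_t$, $f_t\in\mathrm{Lc}(R,\mathcal I_t)$, with $(a\delta_s)(b\delta_t)=\tilde\phi_s(\tilde\phi_{s^{-1}}(a)b)\delta_{st}$, $\tilde\phi_t(f)=\phi_t\circ f$. Define $L_R(S,\varphi):=\mathrm{Lc}(R,\mathcal T_c(E))\rtimes_\Phi G$. *)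

From Stdlib Require List.
From HB Require Import structures.
From mathcomp Require Import all_boot all_order all_algebra.
From mathcomp Require Import boolp classical_sets fsbigop.

Set Implicit Arguments.
Unset Strict Implicit.
Unset Printing Implicit Defensive.

Import GRing.Theory.
Local Open Scope classical_set_scope.
Local Open Scope ring_scope.

Record invSemigroup0 := InvSemigroup0 {
  isg_car :> Type;
  isg_mul : isg_car -> isg_car -> isg_car;
  isg_zero : isg_car;
  isg_star : isg_car -> isg_car;
  isg_mulA : forall a b c, isg_mul a (isg_mul b c) = isg_mul (isg_mul a b) c;
  isg_mul0s : forall a, isg_mul isg_zero a = isg_zero;
  isg_muls0 : forall a, isg_mul a isg_zero = isg_zero;
  isg_star_inv1 : forall s, isg_mul (isg_mul s (isg_star s)) s = s;
  isg_star_inv2 : forall s, isg_mul (isg_mul (isg_star s) s) (isg_star s) = isg_star s;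
  isg_star_uniq : forall s t, isg_mul (isg_mul s t) s = s ->
                   isg_mul (isg_mul t s) t = t -> t = isg_star s
}.

Section InvSemigroupDefs.
Variable S : invSemigroup0.

Local Notation "a ** b" := (isg_mul a b) (at level 40, left associativity).
Local Notation "0s" := (isg_zero S).
Local Notation "s ^*" := (isg_star s).

Definition idem (e : S) : Prop := e ** e = e.
Definition ile (x y : S) : Prop := x ** y = x.

(* Pure gradings phi : S^x -> G (values of phi at 0 are irrelevant and are
   never used below). *)
Definition pure_grading (G : groupType) (phi : S -> G) : Prop :=
  (forall a b, a ** b <> 0s -> phi (a ** b) = (phi a * phi b)%g) /\
  (forall s, s <> 0s -> (phi s = 1%g <-> idem s)).

Definition strongly_Eunitary : Prop :=
  exists (G : groupType) (phi : S -> G), pure_grading phi.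

Definition is_filter (F : set S) : Prop :=
  (forall x, F x -> idem x) /\
  (exists x, F x) /\
  (exists y, idem y /\ ~ F y) /\
  (forall x y, F x -> idem y -> ile x y -> F y) /\
  (forall x y, F x -> F y -> F (x ** y)).

Definition is_ultrafilter (F : set S) : Prop :=
  is_filter F /\ (forall F', is_filter F' -> F `<=` F' -> F' `<=` F).

(* Basic open sets of the (patch) topology on the filter space:
   {F | x_i in F for x_i in X, y_j notin F for y_j in Y}. *)
Definition basic (X Y : seq S) : set (set S) :=
  [set F | (forall x, List.In x X -> F x) /\ (forall y, List.In y Y -> ~ F y)].

(* tight filters: the closure of the set of ultrafilters in F(E) *)
Definition tight (xi : set S) : Prop :=
  is_filter xi /\
  (forall X Y : seq S, basic X Y xi ->
     exists U, is_ultrafilter U /\ basic X Y U).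

Definition T_open (U : set (set S)) : Prop :=
  U `<=` tight /\
  (forall xi, U xi -> exists X Y, basic X Y xi /\ (basic X Y `&` tight) `<=` U).

Definition T_compact (U : set (set S)) : Prop :=
  forall (I : Type) (O : I -> set (set S)),
    (forall i, T_open (O i)) -> U `<=` (fun xi => exists i, O i xi) ->
    exists l : seq I, U `<=` (fun xi => exists i, List.In i l /\ O i xi).

Definition compact_open (U : set (set S)) : Prop := T_open U /\ T_compact U.

Definition V (x : S) : set (set S) := [set xi | tight xi /\ xi x].

Variables (G : groupType) (phi : S -> G).

Definition E_ (g : G) : set S :=
  [set x | idem x /\
     ((exists s, s <> 0s /\ phi s = g /\ ile x (s ** s^*)) \/
      (x = 0s /\ ~ (exists s, s <> 0s /\ phi s = g)))].

(* the union of the V_x, x in E_g; T_c(E_g) is identified with the compact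
   open subsets of T(E) contained in D_ g *)
Definition D_ (g : G) : set (set S) := [set xi | exists x, E_ g x /\ V x xi].

(* the relation y = phi_g(x), x in E_{g^-1} *)
Definition phi_rel (g : G) (x y : S) : Prop :=
  exists s, s <> 0s /\ phi s = g /\ ile x (s^* ** s) /\ y = s ** x ** s^*.

(* The map on tight filters dual to hat-phi_g : T_c(E_{g^-1}) -> T_c(E_g):
   xi (in D_{g^-1}) |-> filter generated by phi_g(xi \cap E_{g^-1}). *)
Definition hdual (g : G) (xi : set S) : set S :=
  [set y | idem y /\ exists x z, xi x /\ E_ g^-1 x /\ phi_rel g x z /\ ile z y].

(* tilde-phi_g on Lc(R, T_c(E_{g^-1})), viewing f : R\{0} -> T_c as the
   function sum_r r 1_{f(r)} on T(E): tilde-phi_g(f) = sum_r r 1_{hat-phi_g(f(r))}. *)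
Definition tact (R : pzRingType) (g : G) (f : set S -> R) : set S -> R :=
  fun eta => if `[< D_ g eta >] then f (hdual g^-1 eta) else 0.

(* Lc(R, I) for I the ideal of compact open subsets of D, f viewed as the
   function sum_r r 1_{f(r)} on T(E): f vanishes outside D, each nonempty
   level set f^{-1}(r), r <> 0, is compact open, and f takes finitely many
   values. *)
Definition Lc (R : pzRingType) (D : set (set S)) (f : set S -> R) : Prop :=
  (forall xi, ~ D xi -> f xi = 0) /\
  (forall xi, ~ tight xi -> f xi = 0) /\
  (forall r : R, r != 0 -> compact_open [set xi | f xi = r]) /\
  (exists l : seq R, forall xi, f xi \in l).

(* An element sum_t f_t delta_t is represented by t |-> f_t. *)
Definition LR_elem (R : pzRingType) (a : G -> set S -> R) : Prop :=
  (forall t, Lc (D_ t) (a t)) /\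
  (exists l : seq G, forall t xi, t \notin l -> a t xi = 0).

Definition LR_add (R : pzRingType) (a b : G -> set S -> R) : G -> set S -> R :=
  fun t xi => a t xi + b t xi.

Definition LR_scale (R : pzRingType) (r : R) (a : G -> set S -> R) : G -> set S -> R :=
  fun t xi => r * a t xi.

(* (a_s delta_s)(b_t delta_t) = tphi_s(tphi_{s^-1}(a_s) b_t) delta_{st};
   the coefficient at u collects the terms with t = s^-1 u. *)
Definition LR_mul (R : pzRingType) (a b : G -> set S -> R) : G -> set S -> R :=
  fun u xi => \sum_(s \in [set: G])
     tact s (fun eta => tact s^-1 (a s) eta * b (s^-1 * u)%g eta) xi.

End InvSemigroupDefs.

Definition LR_iso (S : invSemigroup0) (R : comPzRingType)
  (G1 G2 : groupType) (phi1 : S -> G1) (phi2 : S -> G2) : Prop :=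
  exists Psi : (G1 -> set S -> R) -> (G2 -> set S -> R),
    (forall a, LR_elem phi1 a -> LR_elem phi2 (Psi a)) /\
    (forall a a', LR_elem phi1 a -> LR_elem phi1 a' -> Psi a = Psi a' -> a = a') /\
    (forall b, LR_elem phi2 b -> exists a, LR_elem phi1 a /\ Psi a = b) /\
    (forall a a', LR_elem phi1 a -> LR_elem phi1 a' ->
        Psi (LR_add a a') = LR_add (Psi a) (Psi a')) /\
    (forall (r : R) a, LR_elem phi1 a -> Psi (LR_scale r a) = LR_scale r (Psi a)) /\
    (forall a a', LR_elem phi1 a -> LR_elem phi1 a' ->
        Psi (LR_mul phi1 a a') = LR_mul phi2 (Psi a) (Psi a')).

(* A pure grading phi is determined near a tight filter eta by its germs.  If
   s s^* and s' s'^* both lie in eta, then s^* s' <> 0, and s^* s' is an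
   idempotent exactly when phi s = phi s'; since idempotency does not refer to
   the grading, phi1 s = phi1 s' iff phi2 s = phi2 s' for two pure gradings.
   Hence Psi a, whose coefficient of degree phi2 s at eta is the coefficient of
   a of degree phi1 s at eta, is well defined; it is additive, R-linear and
   inverse to the map built the other way round.  In a product, the summand of
   degree phi t at eta only depends on the germ of t at eta and on the
   conjugate filter t^* eta t, so the two convolution sums correspond term by
   term through the same bijection of germs. *)
From HB Require Import structures.
From mathcomp Require Import all_boot all_order all_algebra.
From mathcomp Require Import boolp classical_sets fsbigop.
From Stdlib Require Import ClassicalEpsilon.

Set Implicit Arguments.
Unset Strict Implicit.
Unset Printing Implicit Defensive.

Import GRing.Theory.
Local Open Scope classical_set_scope.
Local Open Scope ring_scope.

Lemma In_pmap_Some (I : Type) (l : seq (option I)) (i : I) :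
  List.In (Some i) l -> List.In i (pmap id l).
Proof.
elim: l => [|[j|] l IH] //=.
- by case=> [[->]|H]; [left|right; apply: IH].
- by case=> [//|H]; apply: IH.
Qed.

Lemma In_mem (T : eqType) (x : T) (l : seq T) : List.In x l -> x \in l.
Proof. by elim: l => //= y l IH [->|/IH]; rewrite in_cons ?eqxx // => ->; rewrite orbT. Qed.

Section InverseSemigroup.
Variable S : invSemigroup0.
Local Notation "a ** b" := (isg_mul a b) (at level 40, left associativity).
Local Notation "0s" := (isg_zero S).
Local Notation "s ^*" := (isg_star s).

Lemma starK (s : S) : s^*^* = s.
Proof. by symmetry; apply: isg_star_uniq; [exact: isg_star_inv2|exact: isg_star_inv1]. Qed.

Lemma star_idem (e : S) : idem e -> e^* = e.
Proof. by rewrite /idem => He; symmetry; apply: isg_star_uniq; rewrite !He. Qed.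

Lemma idem_mulsV (s : S) : idem (s ** s^*).
Proof. by rewrite /idem isg_mulA isg_star_inv1. Qed.

Lemma idem_mulVs (s : S) : idem (s^* ** s).
Proof. by rewrite /idem isg_mulA isg_star_inv2. Qed.

(* (e f)^* is an idempotent: it equals f (e f)^* e, by uniqueness of inverses. *)
Lemma idemM (e f : S) : idem e -> idem f -> idem (e ** f).
Proof.
rewrite /idem => He Hf; set b := (e ** f)^*.
have Hc : f ** b ** e = b.
  apply: isg_star_uniq.
  - have -> : e ** f ** (f ** b ** e) ** (e ** f) = e ** f ** b ** (e ** f).
      by rewrite !isg_mulA -(isg_mulA e f f) Hf -(isg_mulA _ e e) He.
    exact: isg_star_inv1.
  - have -> : f ** b ** e ** (e ** f) ** (f ** b ** e) = f ** (b ** (e ** f) ** b) ** e.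
      by rewrite !isg_mulA -(isg_mulA _ e e) He -(isg_mulA _ f f) Hf.
    by rewrite isg_star_inv2.
have Hb : b ** b = b.
  rewrite -{1 2}Hc.
  have -> : f ** b ** e ** (f ** b ** e) = f ** (b ** (e ** f) ** b) ** e by rewrite !isg_mulA.
  by rewrite isg_star_inv2 Hc.
by rewrite -[e ** f]starK -/b star_idem.
Qed.

Lemma idemC (e f : S) : idem e -> idem f -> e ** f = f ** e.
Proof.
move=> He Hf; have Hef := idemM He Hf; have Hfe := idemM Hf He.
rewrite /idem in He Hf.
suff -> : f ** e = (e ** f)^* by rewrite star_idem.
apply: isg_star_uniq.
- by rewrite !isg_mulA -(isg_mulA e f f) Hf -(isg_mulA _ e e) He -(isg_mulA (e ** f)).
- by rewrite !isg_mulA -(isg_mulA f e e) He -(isg_mulA _ f f) Hf -(isg_mulA (f ** e)).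
Qed.

Lemma starM (a b : S) : (a ** b)^* = b^* ** a^*.
Proof.
symmetry; apply: isg_star_uniq.
- have -> : a ** b ** (b^* ** a^*) ** (a ** b) = a ** ((b ** b^*) ** (a^* ** a)) ** b.
    by rewrite !isg_mulA.
  rewrite (idemC (idem_mulsV b) (idem_mulVs a)).
  by rewrite !isg_mulA isg_star_inv1 -(isg_mulA a b) -(isg_mulA a) isg_star_inv1.
- have -> : b^* ** a^* ** (a ** b) ** (b^* ** a^*) = b^* ** ((a^* ** a) ** (b ** b^*)) ** a^*.
    by rewrite !isg_mulA.
  rewrite -(idemC (idem_mulsV b) (idem_mulVs a)).
  by rewrite !isg_mulA isg_star_inv2 -(isg_mulA b^* a^*) -(isg_mulA b^*) isg_star_inv2.
Qed.

Lemma star0 : (0s)^* = 0s.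
Proof. by apply: star_idem; rewrite /idem isg_mul0s. Qed.

Lemma star_neq0 (s : S) : s <> 0s -> s^* <> 0s.
Proof. by move=> Hs H; apply: Hs; rewrite -(starK s) H star0. Qed.

Lemma mulsV_neq0 (s : S) : s <> 0s -> s ** s^* <> 0s.
Proof. by move=> Hs H; apply: Hs; rewrite -(isg_star_inv1 s) H isg_mul0s. Qed.

Lemma neq0_of_mulsV (s : S) : s ** s^* <> 0s -> s <> 0s.
Proof. by move=> H E; apply: H; rewrite E isg_mul0s. Qed.

Lemma ile_trans (x y z : S) : ile x y -> ile y z -> ile x z.
Proof. by rewrite /ile => Hxy Hyz; rewrite -Hxy -isg_mulA Hyz. Qed.

Lemma ile_meetl (x y : S) : idem x -> idem y -> ile (x ** y) x.
Proof. by move=> Hx Hy; rewrite /ile (idemC Hx Hy) -isg_mulA Hx. Qed.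

Lemma ile_meetr (x y : S) : idem y -> ile (x ** y) y.
Proof. by move=> Hy; rewrite /ile -isg_mulA Hy. Qed.

Lemma ile_mulC (x y : S) : idem x -> idem y -> ile x y -> y ** x = x.
Proof. by move=> Hx Hy H; rewrite (idemC Hy Hx). Qed.

Lemma idem_conj (t x : S) : idem x -> idem (t ** x ** t^*).
Proof.
move=> Hx; rewrite /idem.
have -> : t ** x ** t^* ** (t ** x ** t^*) = t ** (x ** (t^* ** t)) ** x ** t^*.
  by rewrite !isg_mulA.
by rewrite (idemC Hx (idem_mulVs t)) !isg_mulA isg_star_inv1 -(isg_mulA _ x x) Hx.
Qed.

Lemma idem_conjV (t x : S) : idem x -> idem (t^* ** x ** t).
Proof. by move=> Hx; have := idem_conj (t^*) Hx; rewrite starK. Qed.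

Lemma conj_mono (t x y : S) : idem x -> ile x y -> ile (t ** x ** t^*) (t ** y ** t^*).
Proof.
move=> Hx Hxy; rewrite /ile.
have -> : t ** x ** t^* ** (t ** y ** t^*) = t ** (x ** (t^* ** t)) ** y ** t^*.
  by rewrite !isg_mulA.
by rewrite (idemC Hx (idem_mulVs t)) !isg_mulA isg_star_inv1 -(isg_mulA _ x y) Hxy.
Qed.

Lemma conjVK (t x : S) : idem x -> ile x (t ** t^*) -> t ** (t^* ** x ** t) ** t^* = x.
Proof.
move=> Hx Hxt.
have -> : t ** (t^* ** x ** t) ** t^* = (t ** t^*) ** x ** (t ** t^*) by rewrite !isg_mulA.
by rewrite (ile_mulC Hx (idem_mulsV t) Hxt) Hxt.
Qed.

Lemma conj_ile (t x : S) : ile (t ** x ** t^*) (t ** t^*).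
Proof.
rewrite /ile.
have -> : t ** x ** t^* ** (t ** t^*) = t ** x ** (t^* ** t ** t^*) by rewrite !isg_mulA.
by rewrite isg_star_inv2.
Qed.

Lemma mulsV_mul (t r : S) : t ** r ** (t ** r)^* = t ** (r ** r^*) ** t^*.
Proof. by rewrite starM !isg_mulA. Qed.

Lemma conj_mulsV (t x : S) : idem x -> t ** x ** t^* = (t ** x) ** (t ** x)^*.
Proof. by move=> Hx; rewrite starM (star_idem Hx) !isg_mulA -(isg_mulA t x x) Hx. Qed.

Lemma compatible_mulVs (u v : S) : idem (u ** v^*) -> v ** u^* ** u = u ** v^* ** v.
Proof.
move=> He.
have Hvu : v ** u^* = u ** v^* by rewrite -(star_idem He) starM starK.
have -> : v ** u^* ** u = v ** (v^* ** v) ** (u^* ** u) by rewrite !isg_mulA isg_star_inv1.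
rewrite -(isg_mulA v) (idemC (idem_mulVs v) (idem_mulVs u)) !isg_mulA Hvu.
by rewrite -(isg_mulA (u ** v^*) u) He.
Qed.

Section Filters.

Variable F : set S.
Hypothesis HF : is_filter F.

Lemma filter_idem x : F x -> idem x.
Proof. by case: HF => H _; apply: H. Qed.

Lemma filter_up x y : F x -> idem y -> ile x y -> F y.
Proof. by case: HF => _ [_ [_ [H _]]]; apply: H. Qed.

Lemma filter_meet x y : F x -> F y -> F (x ** y).
Proof. by case: HF => _ [_ [_ [_ H]]]; apply: H. Qed.

Lemma filter_not0 : ~ F 0s.
Proof.
move=> F0; case: HF => _ [_ [[y [Hy Fy]] _]]; apply: Fy.
by apply: (filter_up F0 Hy); rewrite /ile isg_mul0s.
Qed.

Lemma filter_neq0 x : F x -> x <> 0s.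
Proof. by move=> Fx E; apply: filter_not0; rewrite -E. Qed.

End Filters.

Lemma tight_filter (xi : set S) : tight xi -> is_filter xi.
Proof. by case. Qed.

(* The filter generated by r xi r^*: the image of xi under the dual of hat-phi_(phi r). *)
Definition conj_filter (r : S) (xi : set S) : set S :=
  [set y | idem y /\ exists x, xi x /\ ile x (r^* ** r) /\ ile (r ** x ** r^*) y].

Section ConjFilter.

Variables (eta : set S) (t : S).
Hypotheses (HF : is_filter eta) (Ht : eta (t ** t^*)).

Lemma conj_filterV_mulVs : conj_filter (t^*) eta (t^* ** t).
Proof.
split; first exact: idem_mulVs.
exists (t ** t^*); rewrite starK; split=> //; split; first exact: idem_mulsV.
have -> : t^* ** (t ** t^*) ** t = t^* ** t ** (t^* ** t) by rewrite !isg_mulA.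
by rewrite /ile !(idem_mulVs t).
Qed.

Lemma conj_filterV_mem z : eta z -> conj_filter (t^*) eta (t^* ** z ** t).
Proof.
move=> Hz; have Hiz := filter_idem HF Hz.
split; first exact: idem_conjV.
exists (z ** (t ** t^*)); rewrite starK; split; first exact: filter_meet.
split; first exact: ile_meetr (idem_mulsV t).
have -> : t^* ** (z ** (t ** t^*)) ** t = t^* ** z ** t.
  rewrite !isg_mulA -(isg_mulA (t^* ** z ** t) t^*) -(isg_mulA (t^* ** z)).
  by rewrite (isg_mulA t t^*) isg_star_inv1.
exact: idem_conjV.
Qed.

Lemma conj_filterK : conj_filter t (conj_filter (t^*) eta) = eta.
Proof.
apply/seteqP; split=> y.
- move=> [Hy [x' [[Hx' [x [Hx [Hxt Hle]]]] [_ Hle2]]]].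
  rewrite starK in Hxt Hle; have Hix := filter_idem HF Hx.
  apply: (filter_up HF Hx Hy); apply: ile_trans Hle2.
  by have := conj_mono t (idem_conjV t Hix) Hle; rewrite conjVK.
- move=> Hy; have Hiy := filter_idem HF Hy.
  have Hm : idem (y ** (t ** t^*)) := idemM Hiy (idem_mulsV t).
  split=> //; exists (t^* ** (y ** (t ** t^*)) ** t); split.
    exact: conj_filterV_mem (filter_meet HF Hy Ht).
  split; first by have := conj_ile (t^*) (y ** (t ** t^*)); rewrite starK.
  by rewrite (conjVK Hm (ile_meetr _ (idem_mulsV t))); exact: ile_meetl Hiy (idem_mulsV t).
Qed.

End ConjFilter.

Lemma conj_filterV_conj (eta : set S) t y : is_filter eta -> idem y ->
  conj_filter (t^*) eta y -> eta (t ** y ** t^*).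
Proof.
move=> HF Hy [_ [x [Hx [Hxt Hle]]]]; rewrite starK in Hxt Hle.
have Hix := filter_idem HF Hx.
apply: (filter_up HF Hx (idem_conj t Hy)).
by have := conj_mono t (idem_conjV t Hix) Hle; rewrite conjVK.
Qed.

Lemma T_compact_union (A : Type) (l : seq A) (C : A -> set (set S)) :
  (forall a, List.In a l -> T_compact (C a)) ->
  T_compact (fun xi => exists a, List.In a l /\ C a xi).
Proof.
elim: l => [|a l IH] HC I O HO HU; first by exists [::] => xi [b []].
have [l1 H1] := HC a (or_introl erefl) I O HO
  (fun xi Cxi => HU xi (ex_intro _ a (conj (or_introl erefl) Cxi))).
have [l2 H2] := IH (fun b Hb => HC b (or_intror Hb)) I O HO
  (fun xi '(ex_intro b (conj Hb Cxi)) => HU xi (ex_intro _ b (conj (or_intror Hb) Cxi))).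
exists (l1 ++ l2) => xi [b [[<-|Hb] Cxi]].
- have [i [Hi Oi]] := H1 xi Cxi.
  by exists i; split=> //; apply: List.in_or_app; left.
- have [i [Hi Oi]] := H2 xi (ex_intro _ b (conj Hb Cxi)).
  by exists i; split=> //; apply: List.in_or_app; right.
Qed.

Lemma T_open_notin (x : S) : T_open [set xi | tight xi /\ ~ xi x].
Proof.
split=> [xi []//|xi [Ht Hx]]; exists [::], [:: x]; split.
  by split=> [y []|y [<-|[]]].
by move=> eta [[_ H1] Ht']; split=> //; apply: H1; left.
Qed.

(* A cover of K `&` [set xi | xi x] together with the open set of tight
   filters missing x covers K. *)
Lemma T_compact_setI_mem (K : set (set S)) (x : S) :
  T_open K -> T_compact K -> T_compact (K `&` [set xi | xi x]).
Proof.
move=> [KT _] HK I O HO HU.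
pose O' (o : option I) := if o is Some i then O i else [set xi | tight xi /\ ~ xi x].
have HO' : forall o, T_open (O' o) by case=> [i|] /=; [exact: HO | exact: T_open_notin].
have HU' : K `<=` (fun xi => exists o, O' o xi).
  move=> xi Kxi; have [Hx|Hx] := pselect (xi x).
  - by have [i Oi] := HU xi (conj Kxi Hx); exists (Some i).
  - by exists None; split=> //; exact: KT.
have [l Hl] := HK _ O' HO' HU'.
exists (pmap id l) => xi [Kxi Hx].
have [[i|] [Hi Oi]] := Hl xi Kxi; last by case: Oi.
by exists i; split=> //; apply: In_pmap_Some.
Qed.

Section Germs.

Variables (G : groupType) (phi : S -> G).

Definition germ (g : G) (eta : set S) (s : S) : Prop :=
  s <> 0s /\ phi s = g /\ eta (s ** s^*).

Lemma D_germ g xi : D_ phi g xi <-> tight xi /\ exists s, germ g xi s.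
Proof.
split.
- move=> [x [[Hx [[s [Hs [Hps Hle]]]|[-> _]]] [Ht Hxi]]].
  + split=> //; exists s; do 2 split=> //.
    exact: (filter_up (tight_filter Ht) Hxi (idem_mulsV s) Hle).
  + by case: (filter_not0 (tight_filter Ht) Hxi).
- move=> [Ht [t [Ht0 [Hpt Hxi]]]]; exists (t ** t^*); split=> //.
  split; first exact: idem_mulsV.
  by left; exists t; do 2 split=> //; exact: idem_mulsV.
Qed.

Variable R : pzRingType.

Lemma Lc_tight D (f : set S -> R) xi : Lc D f -> f xi != 0 -> tight xi.
Proof. by move=> [_ [HT _]] Hf; apply: contrapT => Hn; move: Hf; rewrite HT ?eqxx. Qed.

Lemma Lc_D D (f : set S -> R) xi : Lc D f -> f xi != 0 -> D xi.
Proof. by move=> [HD _] Hf; apply: contrapT => Hn; move: Hf; rewrite HD ?eqxx. Qed.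

Lemma LR_elem_nontight (a : G -> set S -> R) g eta :
  LR_elem phi a -> ~ tight eta -> a g eta = 0.
Proof. by move=> [HL _] Hn; have [_ [HT _]] := HL g; apply: HT. Qed.

Lemma LR_elem_germ (a : G -> set S -> R) g eta :
  LR_elem phi a -> a g eta != 0 -> tight eta /\ exists s, germ g eta s.
Proof. by move=> [HL _] Hn; apply/D_germ; apply: (Lc_D (HL g)). Qed.

Lemma Lc_level_germ_cover g (f : set S -> R) r : Lc (D_ phi g) f -> r != 0 ->
  exists l : seq S, forall eta, f eta = r -> exists s, List.In s l /\ germ g eta s.
Proof.
move=> Hf Hr; have [_ [_ [HC _]]] := Hf; have [_ Hc] := HC r Hr.
pose O (s : S) := [set xi | tight xi /\ xi (s ** s^*) /\ s <> 0s /\ phi s = g].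
have HO : forall s, T_open (O s).
  move=> s; split=> [xi []//|xi [Ht [Hx Hs]]].
  exists [:: s ** s^*], [::]; split; first by split=> [y [<-|[]]|y []].
  by move=> eta [[H1 _] Ht']; do 2 split=> //; apply: H1; left.
have HU : [set xi | f xi = r] `<=` (fun xi => exists s, O s xi).
  move=> xi /= Hxi; have Hnz : f xi != 0 by rewrite Hxi.
  by have [Ht [t [Ht0 [Hpt Hxt]]]] := proj1 (D_germ g xi) (Lc_D Hf Hnz); exists t.
have [l Hl] := Hc S O HO HU.
by exists l => eta /Hl [s [Hs [_ [H1 [H2 H3]]]]]; exists s.
Qed.

Lemma Lc_germ_cover g (f : set S -> R) : Lc (D_ phi g) f ->
  exists l : seq S, forall eta, f eta != 0 -> exists s, List.In s l /\ germ g eta s.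
Proof.
move=> Hf; have [_ [_ [_ [vl Hvl]]]] := Hf.
suff [l Hl] : exists l : seq S, forall eta, f eta != 0 -> f eta \in vl ->
    exists s, List.In s l /\ germ g eta s.
  by exists l => eta Hn; apply: Hl.
elim: vl {Hvl} => [|r vl [l IH]]; first by exists [::].
have [->|Hr] := eqVneq r 0.
  exists l => eta Hn; rewrite in_cons => /orP[/eqP E|]; last exact: IH.
  by move: Hn; rewrite E eqxx.
have [l1 H1] := Lc_level_germ_cover Hf Hr.
exists (l1 ++ l) => eta Hn; rewrite in_cons => /orP[/eqP/H1|/(IH _ Hn)] [s [Hs Hs']].
- by exists s; split=> //; apply: List.in_or_app; left.
- by exists s; split=> //; apply: List.in_or_app; right.
Qed.

Lemma LR_elem_germ_cover (a : G -> set S -> R) : LR_elem phi a ->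
  exists l : seq S, forall g eta, a g eta != 0 -> exists s, List.In s l /\ germ g eta s.
Proof.
move=> [HL [lG HlG]].
suff [l Hl] : exists l : seq S, forall g eta, g \in lG -> a g eta != 0 ->
    exists s, List.In s l /\ germ g eta s.
  exists l => g eta Hn; apply: Hl => //.
  by apply: contraNT Hn => /HlG ->.
elim: lG {HlG} => [|g0 lG [l IH]]; first by exists [::].
have [l1 H1] := Lc_germ_cover (HL g0).
exists (l1 ++ l) => g eta; rewrite in_cons => /orP[/eqP ->|Hin] Hn.
- have [s [Hs Hs']] := H1 eta Hn.
  by exists s; split=> //; apply: List.in_or_app; left.
- have [s [Hs Hs']] := IH g eta Hin Hn.
  by exists s; split=> //; apply: List.in_or_app; right.
Qed.

Lemma LR_elem_values (a : G -> set S -> R) : LR_elem phi a ->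
  exists vl : seq R, forall g eta, a g eta \in vl.
Proof.
move=> [HL [lG HlG]].
suff [vl Hvl] : exists vl : seq R, forall g eta, g \in lG -> a g eta \in vl.
  exists (0 :: vl) => g eta; have [Hin|Hn] := boolP (g \in lG).
  - by rewrite in_cons Hvl ?orbT.
  - by rewrite HlG // in_cons eqxx.
elim: lG {HlG} => [|g0 lG [vl IH]]; first by exists [::].
have [_ [_ [_ [vl0 Hvl0]]]] := HL g0.
exists (vl0 ++ vl) => g eta; rewrite in_cons mem_cat => /orP[/eqP ->|Hin].
- by rewrite Hvl0.
- by rewrite IH ?orbT.
Qed.

End Germs.

Section Grading.

Variables (G : groupType) (phi : S -> G).
Hypothesis Hphi : pure_grading phi.

Lemma grading_mul a b : a ** b <> 0s -> phi (a ** b) = (phi a * phi b)%g.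
Proof. by case: Hphi => H _; apply: H. Qed.

Lemma grading_idem s : s <> 0s -> idem s -> phi s = 1%g.
Proof. by case: Hphi => _ H Hs Hi; apply/(H s Hs). Qed.

Lemma idem_grading1 s : s <> 0s -> phi s = 1%g -> idem s.
Proof. by case: Hphi => _ H Hs Hi; apply/(H s Hs). Qed.

Lemma grading_star s : s <> 0s -> phi (s^*) = (phi s)^-1%g.
Proof.
move=> Hs; have H0 := mulsV_neq0 Hs.
by have := grading_idem H0 (idem_mulsV s); rewrite grading_mul // => /mulg1_eq <-.
Qed.

Lemma grading_mul_idem_eq u v x : phi u = phi v -> u <> 0s -> v <> 0s ->
  idem x -> x <> 0s -> ile x (u^* ** u) -> ile x (v^* ** v) -> u ** x = v ** x.
Proof.
move=> Huv Hu Hv Hx Hx0 Hxu Hxv.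
have Exv : v^* ** v ** x = x by rewrite (ile_mulC Hx (idem_mulVs v) Hxv).
have Exu : u^* ** u ** x = x by rewrite (ile_mulC Hx (idem_mulVs u) Hxu).
have Huv0 : u ** v^* <> 0s.
  move=> E; apply: Hx0; rewrite -Exu -Exv.
  by rewrite -!isg_mulA (isg_mulA u v^*) E isg_mul0s !isg_muls0.
have He : idem (u ** v^*).
  by apply: idem_grading1 => //; rewrite grading_mul // grading_star // Huv mulgV.
transitivity (u ** (v^* ** v ** x)); first by rewrite Exv.
rewrite !isg_mulA -(compatible_mulVs He) -(isg_mulA (v ** u^*) u x).
by rewrite -(isg_mulA v) (isg_mulA u^*) Exu.
Qed.

Lemma hdual_conj_filter r xi : is_filter xi -> r <> 0s -> xi (r^* ** r) ->
  hdual phi (phi r) xi = conj_filter r xi.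
Proof.
move=> HF Hr Hxr; apply/seteqP; split=> y.
- move=> [Hy [x [z [Hx [_ [[r' [Hr' [Hpr [Hxr' ->]]]] Hzy]]]]]].
  have Hix := filter_idem HF Hx.
  have Hx2 : xi (x ** (r^* ** r)) := filter_meet HF Hx Hxr.
  have Hi2 : idem (x ** (r^* ** r)) := idemM Hix (idem_mulVs r).
  have Hle := ile_meetl Hix (idem_mulVs r).
  split=> //; exists (x ** (r^* ** r)); split=> //; split; first exact: ile_meetr (idem_mulVs r).
  apply: ile_trans Hzy.
  rewrite (conj_mulsV r Hi2) (grading_mul_idem_eq (esym Hpr) Hr Hr' Hi2 (filter_neq0 HF Hx2)).
  + by rewrite -(conj_mulsV r' Hi2); apply: conj_mono.
  + exact: ile_meetr (idem_mulVs r).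
  + exact: ile_trans Hle Hxr'.
- move=> [Hy [x [Hx [Hxr' Hle]]]]; split=> //.
  exists x, (r ** x ** r^*); split=> //; split.
    split; [exact: (filter_idem HF Hx)|left].
    exists (r^*); split; first exact: star_neq0.
    by rewrite grading_star // starK.
  by split=> //; exists r.
Qed.

Lemma germ_conj_filter g t r eta : is_filter eta ->
  germ phi ((phi t)^-1 * g)%g (conj_filter (t^*) eta) r -> germ phi g eta (t ** r).
Proof.
move=> HF [Hr0 [Hpr Hxr]].
have Hw : eta (t ** r ** (t ** r)^*).
  by rewrite mulsV_mul; apply: conj_filterV_conj => //; exact: idem_mulsV.
have Htr := neq0_of_mulsV (filter_neq0 HF Hw).
by split=> //; split=> //; rewrite grading_mul // Hpr mulVKg.
Qed.

Variable R : pzRingType.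

Definition mul_term (a b : G -> set S -> R) (u : G) (eta : set S) (s : G) : R :=
  tact phi s (fun e => tact phi s^-1 (a s) e * b (s^-1 * u)%g e) eta.

Lemma LR_mulE (a b : G -> set S -> R) u eta :
  LR_mul phi a b u eta = \sum_(s \in [set: G]) mul_term a b u eta s.
Proof. by []. Qed.

Lemma mul_term_notD (a b : G -> set S -> R) u eta s :
  ~ D_ phi s eta -> mul_term a b u eta s = 0.
Proof. by move=> HD; rewrite /mul_term /tact asboolF. Qed.

Lemma mul_term_germ (a b : G -> set S -> R) u eta s :
  mul_term a b u eta s != 0 -> exists t, germ phi s eta t.
Proof.
move=> Hn; have [HD|HnD] := pselect (D_ phi s eta); last by rewrite mul_term_notD ?eqxx in Hn.
by have [_] := proj1 (D_germ phi s eta) HD.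
Qed.

Lemma mul_term_val (a b : G -> set S -> R) u eta t :
  tight eta -> t <> 0s -> eta (t ** t^*) ->
  mul_term a b u eta (phi t) =
  if `[< tight (conj_filter (t^*) eta) >]
  then a (phi t) eta * b ((phi t)^-1 * u)%g (conj_filter (t^*) eta) else 0.
Proof.
move=> Ht Ht0 Hx; have HF := tight_filter Ht.
have HD : D_ phi (phi t) eta by apply/D_germ; split=> //; exists t.
rewrite /mul_term /tact (asboolT HD).
have -> : hdual phi (phi t)^-1 eta = conj_filter (t^*) eta.
  by rewrite -(grading_star Ht0) hdual_conj_filter ?starK //; exact: star_neq0.
have [Hte|Hnte] := pselect (tight (conj_filter (t^*) eta)); last first.
  by rewrite (asboolF Hnte) asboolF ?mul0r // => /D_germ [].
have HD' : D_ phi (phi t)^-1 (conj_filter (t^*) eta).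
  apply/D_germ; split=> //; exists (t^*); split; first exact: star_neq0.
  by split; [exact: grading_star|rewrite starK; apply: conj_filterV_mulVs].
rewrite (asboolT Hte) (asboolT HD') invgK hdual_conj_filter ?conj_filterK //.
- exact: tight_filter.
- exact: conj_filterV_mulVs.
Qed.

Lemma LR_mul_nontight (a b : G -> set S -> R) u eta :
  ~ tight eta -> LR_mul phi a b u eta = 0.
Proof. by move=> Hn; apply: fsbig1 => s _; apply: mul_term_notD => /D_germ []. Qed.

End Grading.

Section Transfer.

Variables (G1 G2 : groupType) (phi1 : S -> G1) (phi2 : S -> G2).
Hypotheses (H1 : pure_grading phi1) (H2 : pure_grading phi2).

(* s^* s' is nonzero and its degree is trivial for one grading iff for both. *)
Lemma grading_transfer (eta : set S) s s' : is_filter eta -> s <> 0s -> s' <> 0s ->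
  eta (s ** s^*) -> eta (s' ** s'^*) -> phi2 s = phi2 s' -> phi1 s = phi1 s'.
Proof.
move=> HF Hs Hs' Hx Hx' Hp.
have Hm := filter_neq0 HF (filter_meet HF Hx Hx').
have H0 : s^* ** s' <> 0s.
  by move=> E; apply: Hm; rewrite !isg_mulA -(isg_mulA s s^* s') E isg_muls0 isg_mul0s.
have Hi : idem (s^* ** s').
  by apply: (idem_grading1 H2) => //; rewrite (grading_mul H2) // (grading_star H2) // Hp mulVg.
have := grading_idem H1 H0 Hi; rewrite (grading_mul H1) // (grading_star H1) // => /mulg1_eq.
by rewrite invgK.
Qed.

End Transfer.

Section TwoGradings.

Variables (G1 G2 : groupType) (phi1 : S -> G1) (phi2 : S -> G2).
Hypotheses (H1 : pure_grading phi1) (H2 : pure_grading phi2).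
Variable R : pzRingType.

Lemma fsbig_germ_transfer (eta : set S) (F1 : G1 -> R) (F2 : G2 -> R) :
  is_filter eta ->
  (forall g, F1 g != 0 -> exists t, germ phi1 g eta t) ->
  (forall g, F2 g != 0 -> exists t, germ phi2 g eta t) ->
  (forall t, t <> 0s -> eta (t ** t^*) -> F2 (phi2 t) = F1 (phi1 t)) ->
  \sum_(g \in [set: G1]) F1 g = \sum_(g \in [set: G2]) F2 g.
Proof.
move=> HF HF1 HF2 E12.
pose pick1 g := epsilon (inhabits 0s) (germ phi1 g eta).
have Hpick : forall g, F1 g != 0 -> germ phi1 g eta (pick1 g).
  by move=> g /HF1 Hg; apply: epsilon_spec.
have Hh : forall g, F1 g != 0 -> F2 (phi2 (pick1 g)) = F1 g.
  by move=> g /Hpick [Ht0 [Hpt Hxt]]; rewrite E12 // Hpt.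
rewrite (@fsbig_supp G1 _ _ _ setT F1) (@fsbig_supp G2 _ _ _ setT F2).
rewrite (reindex_fsbig (phi2 \o pick1) (setT `&` F1 @^-1` [set~ 0]) (setT `&` F2 @^-1` [set~ 0])).
  by apply: eq_fsbigr => g; rewrite inE => -[_ /eqP /Hh].
split.
- by move=> g [_ /eqP Hn]; split=> //=; apply/eqP; rewrite Hh.
- move=> g g'; rewrite !inE => -[_ /eqP/Hpick [Ht0 [Hpt Hxt]]] [_ /eqP/Hpick [Ht0' [Hpt' Hxt']]] Eh.
  by rewrite -Hpt -Hpt'; apply: (grading_transfer H1 H2 HF Ht0 Ht0' Hxt Hxt' Eh).
- move=> g [_ /eqP Hn]; have [t [Ht0 [Hpt Hxt]]] := HF2 g Hn.
  have HT1 : F1 (phi1 t) != 0 by rewrite -E12 // Hpt.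
  rewrite -Hpt.
  exists (phi1 t); first by split=> //; apply/eqP.
  have [Ht0' [Hpt' Hxt']] := Hpick _ HT1.
  exact: (grading_transfer H2 H1 HF Ht0' Ht0 Hxt' Hxt Hpt').
Qed.

(* By grading_transfer the value does not depend on the chosen germ. *)
Definition Psi (a : G1 -> set S -> R) : G2 -> set S -> R := fun t eta =>
  if `[< exists s, germ phi2 t eta s >]
  then a (phi1 (epsilon (inhabits 0s) (germ phi2 t eta))) eta else 0.

Lemma Psi_spec a t eta :
  Psi a t eta = 0 \/ exists s, germ phi2 t eta s /\ Psi a t eta = a (phi1 s) eta.
Proof.
rewrite /Psi; case: asboolP => [Hex|_]; last by left.
by right; exists (epsilon (inhabits 0s) (germ phi2 t eta)); split=> //; apply: epsilon_spec.
Qed.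

Lemma Psi_val a eta s : is_filter eta -> s <> 0s -> eta (s ** s^*) ->
  Psi a (phi2 s) eta = a (phi1 s) eta.
Proof.
move=> HF Hs Hx; rewrite /Psi; case: asboolP => [Hex|[]]; last by exists s.
have [Hs' [Hp Hx']] : germ phi2 (phi2 s) eta (epsilon (inhabits 0s) (germ phi2 (phi2 s) eta)).
  exact: epsilon_spec.
by rewrite (grading_transfer H1 H2 HF Hs' Hs Hx' Hx Hp).
Qed.

Lemma Psi_no_germ a t eta : ~ (exists s, germ phi2 t eta s) -> Psi a t eta = 0.
Proof. by rewrite /Psi; case: asboolP. Qed.

Lemma Psi_add a a' : Psi (LR_add a a') = LR_add (Psi a) (Psi a').
Proof.
apply/funext => t; apply/funext => eta; rewrite /Psi /LR_add.
by case: asboolP => // _; rewrite addr0.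
Qed.

Lemma Psi_scale r a : Psi (LR_scale r a) = LR_scale r (Psi a).
Proof.
apply/funext => t; apply/funext => eta; rewrite /Psi /LR_scale.
by case: asboolP => // _; rewrite mulr0.
Qed.

Section PsiElem.

Variable a : G1 -> set S -> R.
Hypothesis Ha : LR_elem phi1 a.

Lemma Psi_neq0 t eta : Psi a t eta != 0 ->
  tight eta /\ exists s, germ phi2 t eta s /\ Psi a t eta = a (phi1 s) eta.
Proof.
case: (Psi_spec a t eta) => [->|[s [Hg E]] Hn]; first by rewrite eqxx.
by split; [apply: (Lc_tight (proj1 Ha (phi1 s))); rewrite -E|exists s].
Qed.

Lemma Psi_level_open t r : r != 0 -> T_open [set xi | Psi a t xi = r].
Proof.
move=> Hr; split=> xi /= E; have Hn : Psi a t xi != 0 by rewrite E.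
  by have [] := Psi_neq0 Hn.
have [Ht [s [[Hs [Hp Hx]] Ea]]] := Psi_neq0 Hn.
have [_ [_ [HC _]]] := proj1 Ha (phi1 s).
have [[_ Ho] _] := HC r Hr.
have [X [Y [[HX HY] Hsub]]] := Ho xi (etrans (esym Ea) E : _).
exists (s ** s^* :: X), Y; split.
  by split=> // y [<-|Hy]; [exact: Hx|exact: HX].
move=> eta [[HX' HY'] Ht'] /=.
have Heta : a (phi1 s) eta = r.
  by apply: (Hsub eta); split=> //; split=> // y Hy; apply: HX'; right.
by rewrite -Hp Psi_val //; [exact: tight_filter|apply: HX'; left].
Qed.

(* The level set is the finite union, over the germ cover of a, of the sets
   {xi | a (phi1 s) xi = r, s s^* in xi} with phi2 s = t. *)
Lemma Psi_level_compact t r : r != 0 -> T_compact [set xi | Psi a t xi = r].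
Proof.
move=> Hr; have [l Hl] := LR_elem_germ_cover Ha.
pose C (s : S) : set (set S) :=
  if `[< s <> 0s /\ phi2 s = t >]
  then [set xi | a (phi1 s) xi = r] `&` [set xi | xi (s ** s^*)] else set0.
suff -> : [set xi | Psi a t xi = r] = (fun xi => exists s, List.In s l /\ C s xi).
  apply: T_compact_union => s _; rewrite /C; case: asboolP => _.
  - have [_ [_ [HC _]]] := proj1 Ha (phi1 s); have [Ho Hc] := HC r Hr.
    exact: T_compact_setI_mem.
  - by move=> I O _ _; exists [::] => xi [].
apply/seteqP; split=> xi /=.
  - move=> E; have Hn : Psi a t xi != 0 by rewrite E.
    have [Ht [s0 [[Hs0 [Hp0 Hx0]] Ea]]] := Psi_neq0 Hn.
    have Hn0 : a (phi1 s0) xi != 0 by rewrite -Ea E.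
    have [s [Hin [Hs [Hp Hx]]]] := Hl _ _ Hn0.
    exists s; split=> //; rewrite /C; case: asboolP => [_|[]].
      by rewrite /= Hp -Ea.
    by split=> //; rewrite -Hp0; apply: (grading_transfer H2 H1 (tight_filter Ht)).
  - move=> [s [_]]; rewrite /C; case: asboolP => // [[Hs Hp]] [Ea Hx].
    have Ht : tight xi by apply: (Lc_tight (proj1 Ha (phi1 s))); rewrite /= Ea.
    by rewrite -Hp Psi_val //; exact: tight_filter.
Qed.

Lemma Psi_elem : LR_elem phi2 (Psi a).
Proof.
have [l Hl] := LR_elem_germ_cover Ha.
split.
- move=> t; split; [|split; [|split]].
  + move=> xi HD; apply: contrapT => /eqP/Psi_neq0 [Ht [s [Hs _]]].
    by apply: HD; apply/D_germ; split=> //; exists s.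
  + by move=> xi HT; apply: contrapT => /eqP/Psi_neq0 [].
  + by move=> r Hr; split; [exact: Psi_level_open|exact: Psi_level_compact].
  + have [vl Hvl] := LR_elem_values Ha.
    exists (0 :: vl) => xi; case: (Psi_spec a t xi) => [->|[s [_ ->]]].
      by rewrite in_cons eqxx.
    by rewrite in_cons Hvl orbT.
- exists (map phi2 l) => t xi Hni; apply: contrapT => /eqP Hn.
  have [Ht [s0 [[Hs0 [Hp0 Hx0]] Ea]]] := Psi_neq0 Hn.
  have Hn0 : a (phi1 s0) xi != 0 by rewrite -Ea.
  have [s [Hin [Hs [Hp Hx]]]] := Hl _ _ Hn0.
  move/negP: Hni; apply; rewrite -Hp0 -(grading_transfer H2 H1 (tight_filter Ht) Hs Hs0 Hx Hx0 Hp).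
  exact/In_mem/List.in_map.
Qed.

End PsiElem.

Lemma Psi_mul_term a a' w t eta : tight eta -> w <> 0s -> eta (w ** w^*) ->
  t <> 0s -> eta (t ** t^*) ->
  mul_term phi2 (Psi a) (Psi a') (phi2 w) eta (phi2 t) = mul_term phi1 a a' (phi1 w) eta (phi1 t).
Proof.
move=> Ht Hw0 Hxw Ht0 Hxt.
rewrite (mul_term_val H2) // (mul_term_val H1) //.
case: asboolP => // Hte; have HFe := tight_filter Hte.
rewrite Psi_val //; last exact: tight_filter.
have Hr : conj_filter (t^*) eta (t^* ** w ** (t^* ** w)^*).
  by rewrite mulsV_mul starK; apply: conj_filterV_mem => //; exact: tight_filter.
have Hr0 := neq0_of_mulsV (filter_neq0 HFe Hr).
have Hst := star_neq0 Ht0.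
have E2 : ((phi2 t)^-1 * phi2 w)%g = phi2 (t^* ** w).
  by rewrite (grading_mul H2) // (grading_star H2).
have E1 : ((phi1 t)^-1 * phi1 w)%g = phi1 (t^* ** w).
  by rewrite (grading_mul H1) // (grading_star H1).
by rewrite E2 E1 Psi_val.
Qed.

Lemma Psi_mul a a' : Psi (LR_mul phi1 a a') = LR_mul phi2 (Psi a) (Psi a').
Proof.
apply/funext => v; apply/funext => eta.
have [Ht|Hnt] := pselect (tight eta); last first.
  rewrite LR_mul_nontight //.
  by case: (Psi_spec (LR_mul phi1 a a') v eta) => [->|[s [_ ->]]]; rewrite ?LR_mul_nontight.
have HF := tight_filter Ht.
have [[w [Hw0 [<- Hxw]]]|Hnone] := pselect (exists w, germ phi2 v eta w).
  rewrite Psi_val // !LR_mulE; apply: (fsbig_germ_transfer HF).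
  - exact: mul_term_germ.
  - exact: mul_term_germ.
  - by move=> t Ht0 Hxt; apply: Psi_mul_term.
rewrite Psi_no_germ // LR_mulE; apply/esym/fsbig1 => s _.
have [HD|HnD] := pselect (D_ phi2 s eta); last exact: mul_term_notD.
have [_ [t [Ht0 [<- Hxt]]]] := proj1 (D_germ phi2 s eta) HD.
rewrite (mul_term_val H2) //; case: asboolP => // Hte.
case: (Psi_spec a' ((phi2 t)^-1 * v)%g (conj_filter (t^*) eta)) => [->|[r [Hr _]]].
  by rewrite mulr0.
by case: Hnone; exists (t ** r); apply: (germ_conj_filter H2).
Qed.

End TwoGradings.

Lemma PsiK (G1 G2 : groupType) (phi1 : S -> G1) (phi2 : S -> G2) (R : pzRingType)
  (b : G2 -> set S -> R) : pure_grading phi1 -> pure_grading phi2 ->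
  LR_elem phi2 b -> Psi phi1 phi2 (Psi phi2 phi1 b) = b.
Proof.
move=> H1 H2 Hb; apply/funext => t; apply/funext => eta.
have [Ht|Hnt] := pselect (tight eta); last first.
  rewrite (LR_elem_nontight _ Hb) //.
  case: (Psi_spec phi1 phi2 (Psi phi2 phi1 b) t eta) => [->|[s [_ ->]]] //.
  case: (Psi_spec phi2 phi1 b (phi1 s) eta) => [->|[s' [_ ->]]] //.
  by rewrite (LR_elem_nontight _ Hb).
have HF := tight_filter Ht.
have [[s [Hs [Hp Hx]]]|Hnone] := pselect (exists s, germ phi2 t eta s).
  by rewrite -Hp (Psi_val H1 H2) // (Psi_val H2 H1).
rewrite Psi_no_germ //; apply/esym/eqP; apply: contraT => Hn.
by have [_ [s Hs]] := LR_elem_germ Hb Hn; case: Hnone; exists s.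
Qed.

End InverseSemigroup.

Theorem mainTheorem14 (S : invSemigroup0) (R : comPzRingType)
  (G1 G2 : groupType) (phi1 : S -> G1) (phi2 : S -> G2) :
  strongly_Eunitary S ->
  pure_grading phi1 -> pure_grading phi2 ->
  LR_iso R phi1 phi2.
Proof.
move=> _ H1 H2; exists (Psi phi1 phi2 (R:=R)).
split; [exact: Psi_elem|split; [|split; [|split; [|split]]]].
- move=> a a' Ha Ha' E.
  by rewrite -(PsiK H2 H1 Ha) -(PsiK H2 H1 Ha') E.
- move=> b Hb; exists (Psi phi2 phi1 b); split; first exact: Psi_elem.
  exact: PsiK.
- by move=> a a' _ _; apply: Psi_add.
- by move=> r a _; apply: Psi_scale.
- by move=> a a' _ _; apply: Psi_mul.
Qed.
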